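(* For every $a^*>0$ and every $\beta>0$, $\kappa_1(4\pi,\beta)<\beta$.
   Context: $\mathcal F_{4\pi}$ is the set of $f\in L^2(]0,a^*[)$ whose distributional derivative satisfies $\int_0^{a^*}a|f'(a)|^2da<\infty$, and $\kappa_1(4\pi,\beta):=\inf_{f\in\mathcal F_{4\pi}\setminus\{0\}}\frac{\int_0^{a^*}\left(4\pi a|f'|^2+\frac{\beta^2a}{4\pi}|f|^2\right)da}{\int_0^{a^*}|f|^2da}$. *)

From HB Require Import structures.
From mathcomp Require Import all_boot all_order all_algebra.
From mathcomp Require Import all_classical all_reals all_analysis.
Set Implicit Arguments. Unset Strict Implicit. Unset Printing Implicit Defensive.
Import Order.TTheory GRing.Theory Num.Theory.
Import numFieldNormedType.Exports.
Local Open Scope classical_set_scope.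
Local Open Scope ring_scope.

Section Defs.
Variable R : realType.
Local Notation mu := (@lebesgue_measure R).

Definition Iopen (astar : R) : set R := `]0, astar[%classic.

Definition test_fun (astar : R) (phi : R -> R) : Prop :=
  (forall (n : nat) (x : R), derivable (derive1n n phi) x 1) /\
  exists c d : R, 0 < c /\ c <= d /\ d < astar /\
    (forall x, x < c \/ d < x -> phi x = 0).

Definition distr_deriv (astar : R) (f g : R -> R) : Prop :=
  measurable_fun (Iopen astar) g /\
  forall phi, test_fun astar phi ->
    Rintegral mu (Iopen astar) (fun x : R => f x * derive1 phi x) =
    - Rintegral mu (Iopen astar) (fun x : R => g x * phi x).

Definition L2 (astar : R) (f : R -> R) : Prop :=
  measurable_fun (Iopen astar) f /\
  (\int[mu]_(x in Iopen astar) ((f x) ^+ 2)%:E < +oo)%E.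

Definition F4pi (astar : R) (f g : R -> R) : Prop :=
  L2 astar f /\ distr_deriv astar f g /\
  (\int[mu]_(x in Iopen astar) (x * (g x) ^+ 2)%:E < +oo)%E.

Definition L2_zero (astar : R) (f : R -> R) : Prop :=
  {ae mu, forall x, Iopen astar x -> f x = 0}.

Definition rayleigh (astar beta : R) (f g : R -> R) : R :=
  Rintegral mu (Iopen astar)
    (fun x : R => 4 * pi * x * (g x) ^+ 2 + beta ^+ 2 * x / (4 * pi) * (f x) ^+ 2)
  / Rintegral mu (Iopen astar) (fun x : R => (f x) ^+ 2).

Definition kappa1 (astar beta : R) : R :=
  inf [set q | exists f g : R -> R,
         F4pi astar f g /\ ~ L2_zero astar f /\ q = rayleigh astar beta f g].

End Defs.

From HB Require Import structures.
From mathcomp Require Import all_boot all_order all_algebra.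
From mathcomp Require Import all_classical all_reals all_analysis.
From mathcomp Require Import ring.
Set Implicit Arguments. Unset Strict Implicit. Unset Printing Implicit Defensive.
Import Order.TTheory GRing.Theory Num.Theory.
Import numFieldNormedType.Exports.
Local Open Scope classical_set_scope.
Local Open Scope ring_scope.

(* Take the test function f(a) = exp(-k a) with k = beta/(4 pi), whose
   classical derivative is also its distributional one.  For this choice
   4 pi k^2 = beta^2/(4 pi) = beta k, so the Rayleigh quotient equals
   beta * (2k \int a e^{-2ka}) / (\int e^{-2ka}).  Integrating
   (a e^{-2ka})' = e^{-2ka} - 2k a e^{-2ka} over ]0, a*[ gives
   \int e^{-2ka} - 2k \int a e^{-2ka} = a* e^{-2k a*} > 0, so the quotient,
   and hence the infimum kappa_1, is below beta. *)

Section Exponential_test_function.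
Variable R : realType.
Local Notation mu := (@lebesgue_measure R).
Implicit Types (a b k m n x : R) (f g h F : R -> R).

(* The library's [continuousM] and [continuousD] are stated for [f \* g] and
   [f + g], which [apply:] does not unify with the pointwise lambda forms. *)
Lemma continuousMf f g : continuous f -> continuous g ->
  continuous (fun x => f x * g x).
Proof. by move=> cf cg x; exact: (@continuousM _ _ f g x (cf x) (cg x)). Qed.

Lemma continuousDf f g : continuous f -> continuous g ->
  continuous (fun x => f x + g x).
Proof. by move=> cf cg x; exact: (@continuousD _ _ _ f g x (cf x) (cg x)). Qed.

Lemma continuousXf f (p : nat) : continuous f -> continuous (fun x => f x ^+ p).
Proof.
move=> cf; elim: p => [|p IHp].
  by move=> x; exact: cst_continuous.
have -> : (fun x => f x ^+ p.+1) = (fun x => f x * f x ^+ p).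
  by apply: funext => x; rewrite exprS.
exact: continuousMf.
Qed.

Lemma derivable1_continuous F : (forall x, derivable F x 1) -> continuous F.
Proof. by move=> dF x; apply: differentiable_continuous; exact/derivable1_diffP. Qed.

Lemma derivableT_oo_LRcontinuous F a b : (forall x, derivable F x 1) ->
  derivable_oo_LRcontinuous F a b.
Proof.
move=> dF; have cF := derivable1_continuous dF.
by split; [move=> x _; exact: dF | exact/cvg_at_right_filter/cF
  | exact/cvg_at_left_filter/cF].
Qed.

Lemma is_derive_expRM m x :
  is_derive x 1 (fun y => expR (m * y)) (m * expR (m * x)).
Proof.
have := is_derive1_comp (is_derive_expR (m * x)) (is_deriveZ m (is_derive_id x 1)).
by move/is_derive_eq; apply; rewrite /GRing.scale /= mulr1 mulrC.
Qed.

Lemma continuous_expRM m : continuous (fun x => expR (m * x)).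
Proof. by apply: derivable1_continuous => x; exact: (is_derive_expRM m x).(ex_derive). Qed.

Lemma is_derive_id_mul_expRM n x :
  is_derive x 1 (fun y => y * expR (n * y)) (expR (n * x) + n * (x * expR (n * x))).
Proof.
apply: (is_derive_eq (is_deriveM (is_derive_id x 1) (is_derive_expRM n x))).
by rewrite /GRing.scale /=; ring.
Qed.

Ltac continuity := repeat first [ assumption | move=> ?; exact: cst_continuous
  | move=> ?; exact: cvg_id | exact: continuous_expRM
  | apply: continuousDf | apply: continuousMf | apply: continuousXf ].

Section Iopen.
Variable a : R.

Lemma Iopen_sub_itvcc : Iopen a `<=` `[0, a].
Proof. by move=> x /=; rewrite !in_itv /= => /andP[x0 xa]; rewrite !ltW. Qed.

Lemma Iopen_gt0 x : Iopen a x -> 0 < x.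
Proof. by rewrite /Iopen /= in_itv /= => /andP[]. Qed.

Lemma continuous_integrable_Iopen h : continuous h ->
  mu.-integrable (Iopen a) (EFin \o h).
Proof.
move=> ch; apply: (integrableS (mu := mu) (measurable_itv `[0, a]) _ Iopen_sub_itvcc).
  exact: measurable_itv.
exact/continuous_compact_integrable/continuous_subspaceT/ch/segment_compact.
Qed.

Lemma Rintegral_Iopen_itvcc h : continuous h ->
  Rintegral mu (Iopen a) h = \int[mu]_(x in `[0, a]) h x.
Proof.
move=> ch; rewrite /Iopen Rintegral_itv_obnd_cbnd ?Rintegral_itv_bndo_bndc //.
- apply: (integrableS (mu := mu) (measurable_itv `[0, a]) (measurable_itv _)); last first.
    exact/continuous_compact_integrable/continuous_subspaceT/ch/segment_compact.
  by move=> x /=; rewrite !in_itv /= => /andP[-> /ltW].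
- exact: continuous_integrable_Iopen.
Qed.

Lemma integral_Iopen_lt_pinfty h : continuous h ->
  (\int[mu]_(x in Iopen a) (h x)%:E < +oo)%E.
Proof.
move=> /continuous_integrable_Iopen/integrableP[mh hfin].
apply: le_lt_trans hfin; apply: le_trans (lee_abs _) _.
exact: (le_abse_integral mu (measurable_itv _) mh).
Qed.

Lemma L2_continuous f : continuous f -> L2 a f.
Proof.
move=> cf; split; last by apply: integral_Iopen_lt_pinfty; continuity.
by apply: measurable_funTS; exact: measurable_realfun.continuous_measurable_fun.
Qed.

Lemma distr_deriv_classical F f : 0 < a ->
  (forall x, is_derive x 1 F (f x)) -> continuous f -> distr_deriv a F f.
Proof.
move=> a0 dF cf; split.
  by apply: measurable_funTS; exact: measurable_realfun.continuous_measurable_fun.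
move=> phi [dphi [c [d [c0 [cd [da phi_supp]]]]]].
have cF := derivable1_continuous (fun x => (dF x).(ex_derive)).
have cphi := derivable1_continuous (dphi 0%N).
have cphi' := derivable1_continuous (dphi 1%N).
rewrite !Rintegral_Iopen_itvcc; [|continuity..].
rewrite (Rintegration_by_parts (F := F) (G := phi) (f := f) (g := derive1 phi) a0).
- by rewrite (phi_supp 0) ?(phi_supp a); [rewrite !mulr0 subrr sub0r|right|left].
- exact: continuous_subspaceT.
- exact: derivableT_oo_LRcontinuous (fun x => (dF x).(ex_derive)).
- by move=> x _; rewrite derive1E derive_val.
- exact: continuous_subspaceT.
- exact: derivableT_oo_LRcontinuous (dphi 0%N).
- by [].
Qed.

Lemma F4pi_classical F f : 0 < a ->
  (forall x, is_derive x 1 F (f x)) -> continuous f -> F4pi a F f.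
Proof.
move=> a0 dF cf; have cF := derivable1_continuous (fun x => (dF x).(ex_derive)).
split; [exact: L2_continuous | split; first exact: distr_deriv_classical].
by apply: integral_Iopen_lt_pinfty; continuity.
Qed.

Lemma nonvanishing_not_L2_zero f : 0 < a ->
  (forall x, Iopen a x -> f x != 0) -> ~ L2_zero a f.
Proof.
move=> a0 f_neq0 [N [mN N0 fN]].
have IN : Iopen a `<=` N.
  by move=> x Ix; apply: fN => /= /(_ Ix) /eqP; apply/negP/f_neq0.
have : (mu (Iopen a) <= 0)%E.
  by rewrite -N0; apply: le_measure => //; rewrite inE //; exact: measurable_itv.
by rewrite /Iopen lebesgue_measure_itv /= lte_fin a0 oppr0 addr0 lee_fin leNgt a0.
Qed.

Lemma rayleigh_ge0 b f g : 0 <= rayleigh a b f g.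
Proof.
have pi0 := pi_gt0 R.
rewrite /rayleigh; apply: divr_ge0; apply: Rintegral_ge0 => x /Iopen_gt0 x0; last exact: sqr_ge0.
have x_ge0 := ltW x0; have four_pi_ge0 : 0 <= 4 * pi :> R by rewrite mulr_ge0 ?ltW.
apply: addr_ge0; apply: mulr_ge0 (sqr_ge0 _).
  exact: mulr_ge0.
exact: divr_ge0 (mulr_ge0 (sqr_ge0 b) x_ge0) four_pi_ge0.
Qed.

Lemma kappa1_le_rayleigh b f g : F4pi a f g -> ~ L2_zero a f ->
  kappa1 a b <= rayleigh a b f g.
Proof.
move=> Ffg f_neq0; apply: ge_inf; last by exists f, g.
by exists 0 => _ [f' [g' [_ [_ ->]]]]; exact: rayleigh_ge0.
Qed.

Lemma Rintegral_expRM_add_mul n : 0 < a ->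
  Rintegral mu (Iopen a) (fun x => expR (n * x)) +
    n * Rintegral mu (Iopen a) (fun x => x * expR (n * x)) = a * expR (n * a).
Proof.
move=> a0; have mI : measurable (Iopen a) by exact: measurable_itv.
rewrite -RintegralZl ?continuous_integrable_Iopen; [|by continuity..].
rewrite -RintegralD ?continuous_integrable_Iopen; [|by continuity..].
rewrite Rintegral_Iopen_itvcc; last by continuity.
rewrite /Rintegral (@continuous_FTC2 R _ (fun y => y * expR (n * y)) 0 a a0).
- by rewrite -EFinB /= mul0r subr0.
- by apply: continuous_subspaceT; continuity.
- apply: derivableT_oo_LRcontinuous => x.
  exact: (is_derive_id_mul_expRM n x).(ex_derive).
- by move=> x _; rewrite derive1E (is_derive_id_mul_expRM n x).(derive_val).
Qed.

Lemma Rintegral_id_mul_expRM_lt k : 0 < a ->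
  2 * k * Rintegral mu (Iopen a) (fun x => x * expR (- (2 * k) * x)) <
  Rintegral mu (Iopen a) (fun x => expR (- (2 * k) * x)).
Proof.
move=> a0; rewrite -subr_gt0.
have := Rintegral_expRM_add_mul (- (2 * k)) a0; rewrite mulNr => ->.
by rewrite mulr_gt0 ?expR_gt0.
Qed.

Lemma rayleigh_expRM b k : 4 * pi * k = b ->
  rayleigh a b (fun x => expR (- k * x)) (fun x => - k * expR (- k * x)) =
  b * (2 * k * Rintegral mu (Iopen a) (fun x => x * expR (- (2 * k) * x)) /
       Rintegral mu (Iopen a) (fun x => expR (- (2 * k) * x))).
Proof.
move=> bE; have pi_neq0 : pi != 0 :> R by rewrite gt_eqF ?pi_gt0.
have sqr_expRM x : expR (- k * x) ^+ 2 = expR (- (2 * k) * x).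
  by rewrite -expRM_natl; congr expR; ring.
rewrite /rayleigh [RHS]mulrA [in RHS]mulrA -RintegralZl; [|exact: measurable_itv|].
  congr (_ / _); apply: eq_Rintegral => x _; rewrite ?exprMn sqr_expRM //.
  by rewrite -bE; move: (pi : R) pi_neq0 => p p_neq0; field.
by apply: continuous_integrable_Iopen; continuity.
Qed.

Lemma rayleigh_expRM_lt b k : 0 < a -> 0 < k -> 4 * pi * k = b ->
  rayleigh a b (fun x => expR (- k * x)) (fun x => - k * expR (- k * x)) < b.
Proof.
move=> a0 k0 bE; have b0 : 0 < b by rewrite -bE !mulr_gt0 ?pi_gt0.
have lt_ID := Rintegral_id_mul_expRM_lt k a0.
rewrite rayleigh_expRM // gtr_pMr // ltr_pdivrMr ?mul1r //.
apply: le_lt_trans lt_ID; apply: mulr_ge0; first exact: mulr_ge0 _ (ltW k0).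
apply: Rintegral_ge0 => x /Iopen_gt0 x0.
by rewrite mulr_ge0 ?expR_ge0 ?ltW.
Qed.

End Iopen.
End Exponential_test_function.

Theorem mainTheorem8 (R : realType) (astar beta : R) :
  0 < astar -> 0 < beta -> kappa1 astar beta < beta.
Proof.
move=> a0 b0; have pi0 := pi_gt0 R.
pose k := beta / (4 * pi).
have k0 : 0 < k by rewrite divr_gt0 ?mulr_gt0.
have bE : 4 * pi * k = beta by rewrite mulrC divfK // gt_eqF ?mulr_gt0.
have test_fun_F4pi :
    F4pi astar (fun x => expR (- k * x)) (fun x => - k * expR (- k * x)).
  apply: F4pi_classical => //; first exact: is_derive_expRM.
  by apply: continuousMf; [move=> ?; exact: cst_continuous | exact: continuous_expRM].
have test_fun_neq0 : ~ L2_zero astar (fun x => expR (- k * x)).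
  by apply: nonvanishing_not_L2_zero => // x _; rewrite gt_eqF ?expR_gt0.
apply: le_lt_trans (kappa1_le_rayleigh beta test_fun_F4pi test_fun_neq0) _.
exact: rayleigh_expRM_lt.
Qed.
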